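(* Assume $\chi$ is weakly generic and let $\sigma=\sigma_{a,b}$ be a Serre weight, $r_\tau=a_\tau-b_\tau+1$. Let $s,t\in\mathbf{Z}_{\ge0}^\Sigma$ satisfy, for each $\tau$, $s_\tau+t_\tau=a_\tau-b_\tau+e$ and ($s_\tau\ge r_\tau$ or $t_\tau\ge r_\tau$), and $\chi_1|_{I_K}=\prod_\tau\omega_\tau^{s_\tau}$, $\chi_2|_{I_K}=\prod_\tau\omega_\tau^{t_\tau}$. Define $J=\{\tau\in\Sigma: t_\tau\le e-1\}$ and $x_\tau=s_\tau$ if $\tau\notin J$, $x_\tau=s_\tau-r_\tau$ if $\tau\in J$. Suppose $(J,x)$ is the maximal element of $\mathcal{S}(\chi_1,\chi_2,\sigma)$. Then $J=\{\tau\in\Sigma: t_\tau<r_\tau\}$.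
   Context: Let $p$ be a prime, $K/\mathbf{Q}_p$ finite with residue field $k$, residue degree $f$, ramification index $e$; $I_K$ inertia. Fix $\varpi\in\overline{K}$ with $\varpi^{p^f-1}$ a uniformiser; $\omega\colon G_K\to k^\times$ sends $g$ to the reduction of $g(\varpi)/\varpi$. $\Sigma=\mathrm{Hom}_{\mathbf{F}_p}(k,\overline{\mathbf{F}}_p)$, $\varphi(x)=x^p$, $\omega_\tau=\tau\circ\omega$, $\Omega_{\tau,a}=\sum_{i=0}^{f-1}p^ia_{\tau\circ\varphi^i}$ for $a\in\mathbf{Z}^\Sigma$. $\chi_1,\chi_2\colon G_K\to\overline{\mathbf{F}}_p^\times$ continuous characters, $\chi=\chi_1\chi_2^{-1}=\psi\prod_\tau\omega_\tau^{n_\tau}$, $\psi$ unramified, $n_\tau\in[1,p]$, some $n_\tau<p$. Weakly generic: $n_\tau\in[e,p-e]$ for all $\tau$. Serre weight $\sigma_{a,b}=\bigotimes_\tau(\det^{b_\tau}\otimes\mathrm{Sym}^{a_\tau-b_\tau}k^2)\otimes_{k,\tau}\overline{\mathbf{F}}_p$, $a_\tau-b_\tau\in[0,p-1]$. $\mathcal{S}(\chi_1,\chi_2,\sigma)$: pairs $(J,x)$, $J\subseteq\Sigma$, $x\in\mathbf{Z}^\Sigma$, $x_\tau\in[0,e-1]$, with $\chi_1|_{I_K}=\prod_{\tau\in J}\omega_\tau^{a_\tau+1+x_\tau}\prod_{\tau\notin J}\omega_\tau^{b_\tau+x_\tau}$ and $\chi_2|_{I_K}=\prod_{\tau\notin J}\omega_\tau^{a_\tau+e-x_\tau}\prod_{\tau\in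 J}\omega_\tau^{b_\tau+e-1-x_\tau}$. With $s(J,x)_\tau=a_\tau-b_\tau+1+x_\tau$ for $\tau\in J$ and $x_\tau$ for $\tau\notin J$, the order is $(J,x)\preceq(J',x')$ iff $\Omega_{\tau,s(J',x')-s(J,x)}\in(p^f-1)\mathbf{Z}_{\ge0}$ for all $\tau$; a non-empty $\mathcal{S}$ has a unique maximal element. *)

From HB Require Import structures.
From mathcomp Require Import all_boot all_order all_algebra all_field.

Set Implicit Arguments.
Unset Strict Implicit.
Unset Printing Implicit Defensive.

Import GRing.Theory.
Local Open Scope ring_scope.

(* Sigma = Hom_{F_p}(k, Fbar_p) is enumerated as tau_i := tau0 \o phi^i,
   i : 'I_f, for a fixed embedding tau0 : k -> L (L plays Fbar_p).
   Then tau_i \o phi^j = tau_{(i+j) mod f}. *)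
Definition sigma_shift (f : nat) (i : 'I_f) (j : nat) : 'I_f :=
  Ordinal (ltn_pmod (i + j) (leq_ltn_trans (leq0n i) (ltn_ord i))).

Definition Omega (p f : nat) (i : 'I_f) (d : 'I_f -> int) : int :=
  \sum_(j < f) (p ^ j)%:Z * d (sigma_shift i j).

Section Chars.
Variables (p f e : nat) (k : finFieldType) (L : fieldType)
  (tau0 : {rmorphism k -> L}) (I : Type) (omega : I -> k)
  (chi1 chi2 : I -> L) (a b : 'I_f -> int).

(* omega_{tau_i}(g) = tau_i (omega g) = tau0 ((omega g)^(p^i)) , g in I_K *)
Definition omega_tau (i : 'I_f) (g : I) : L := tau0 (omega g ^+ (p ^ i)).

Definition charI (m : 'I_f -> int) (g : I) : L :=
  \prod_(i < f) omega_tau i g ^ m i.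

(* weak genericity of chi = chi1 chi2^{-1} (only its restriction to
   inertia matters: psi is unramified) *)
Definition weakly_generic : Prop :=
  exists n : 'I_f -> nat,
    [/\ forall i, (1 <= n i <= p)%N,
        exists i, (n i < p)%N,
        forall g, chi1 g / chi2 g = charI (fun i => (n i)%:Z) g
      & forall i, (e <= n i <= p - e)%N].

Definition inS (J : {set 'I_f}) (x : 'I_f -> int) : Prop :=
  [/\ forall i, 0 <= x i <= (e - 1)%N%:Z,
      forall g, chi1 g = charI (fun i => if i \in J then a i + 1 + x i
                                          else b i + x i) g
    & forall g, chi2 g = charI (fun i => if i \in J then b i + e%:Z - 1 - x i
                                          else a i + e%:Z - x i) g].

Definition sJx (J : {set 'I_f}) (x : 'I_f -> int) (i : 'I_f) : int :=
  if i \in J then a i - b i + 1 + x i else x i.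

Definition preceq (J : {set 'I_f}) (x : 'I_f -> int)
                  (J' : {set 'I_f}) (x' : 'I_f -> int) : Prop :=
  forall i, exists m : nat,
    Omega p i (fun j => sJx J' x' j - sJx J x j) = ((p ^ f - 1) * m)%N%:Z.

Definition is_maxS (J : {set 'I_f}) (x : 'I_f -> int) : Prop :=
  inS J x /\
  forall J' x', inS J' x' -> preceq J x J' x' -> J' = J /\ x' =1 x.

End Chars.

From HB Require Import structures.
From mathcomp Require Import all_boot all_order all_algebra all_field.
From mathcomp Require Import zify.

Set Implicit Arguments.
Unset Strict Implicit.
Unset Printing Implicit Defensive.

Import Order.TTheory GRing.Theory.
Local Open Scope ring_scope.

(* If [tau \in J] had [x_tau + r_tau <= e - 1], then removing [tau] from [J]
   and raising [x_tau] by [r_tau] would give a second element of [S] with the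
   same vector [s(J, x)], hence comparable to [(J, x)] in both directions,
   contradicting maximality. So [tau \in J] forces [s_tau = x_tau + r_tau >= e],
   i.e. [t_tau = r_tau - 1 + e - s_tau < r_tau]; conversely [t_tau < r_tau]
   forces [s_tau >= r_tau] and then [t_tau <= e - 1]. *)

Section MaximalElement.

Variables (p f e : nat) (k : finFieldType) (L : fieldType)
  (tau0 : {rmorphism k -> L}) (I : Type) (omega : I -> k)
  (chi1 chi2 : I -> L) (a b : 'I_f -> int).

Definition xsetD1 (x : 'I_f -> int) (i : 'I_f) : 'I_f -> int :=
  fun j => if j == i then x i + (a i - b i + 1) else x j.

Lemma eq_charI (m m' : 'I_f -> int) :
  m =1 m' -> charI p tau0 omega m =1 charI p tau0 omega m'.
Proof. by move=> eq_m g; apply: eq_bigr => j _; rewrite eq_m. Qed.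

Lemma preceq_sJx_eq (J J' : {set 'I_f}) (x x' : 'I_f -> int) :
  sJx a b J x =1 sJx a b J' x' -> preceq p a b J x J' x'.
Proof.
move=> eq_s i; exists 0%N; rewrite muln0 /Omega big1 // => j _.
by rewrite eq_s subrr mulr0.
Qed.

Lemma sJx_setD1 (J : {set 'I_f}) (x : 'I_f -> int) (i : 'I_f) :
  i \in J -> sJx a b (J :\ i) (xsetD1 x i) =1 sJx a b J x.
Proof.
move=> iJ j; rewrite /sJx /xsetD1 in_setD1.
by case: eqVneq => [->|] //=; rewrite iJ addrC.
Qed.

Lemma inS_setD1 (J : {set 'I_f}) (x : 'I_f -> int) (i : 'I_f) :
  i \in J -> 0 <= a i - b i -> x i + (a i - b i + 1) <= (e - 1)%N%:Z ->
  inS p e tau0 omega chi1 chi2 a b J x ->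
  inS p e tau0 omega chi1 chi2 a b (J :\ i) (xsetD1 x i).
Proof.
move=> iJ ab_ge0 xi_le [x_range chi1E chi2E]; rewrite /xsetD1.
split=> [j | g | g].
- by case: eqVneq => _ //; have := x_range i; lia.
- rewrite chi1E; apply: eq_charI => j; rewrite in_setD1.
  by case: eqVneq => [->|] //=; rewrite iJ; lia.
- rewrite chi2E; apply: eq_charI => j; rewrite in_setD1.
  by case: eqVneq => [->|] //=; rewrite iJ; lia.
Qed.

Lemma is_maxS_lt_sJx (J : {set 'I_f}) (x : 'I_f -> int) (i : 'I_f) :
  is_maxS p e tau0 omega chi1 chi2 a b J x -> i \in J -> 0 <= a i - b i ->
  (e - 1)%N%:Z < sJx a b J x i.
Proof.
move=> [xS x_max] iJ ab_ge0; rewrite /sJx iJ addrC ltNge; apply/negP => xi_le.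
have [JiE _] := x_max _ _ (inS_setD1 iJ ab_ge0 xi_le xS)
  (preceq_sJx_eq (fun j => esym (sJx_setD1 x iJ j))).
by move: iJ; rewrite -JiE in_setD1 eqxx.
Qed.

End MaximalElement.

Theorem lemma5p9 (p f e : nat) (k : finFieldType) (L : closedFieldType)
  (tau0 : {rmorphism k -> L}) (I : Type) (omega : I -> k)
  (chi1 chi2 : I -> L) (a b : 'I_f -> int) (s t : 'I_f -> nat) :
  prime p -> (0 < f)%N -> (0 < e)%N -> #|k| = (p ^ f)%N -> p \in [pchar L] ->
  (forall g, omega g != 0) ->
  (forall y : k, y != 0 -> exists g, omega g = y) ->
  weakly_generic p f e tau0 omega chi1 chi2 ->
  (forall i, 0 <= a i - b i <= (p - 1)%N%:Z) ->
  (forall i, (s i + t i)%N%:Z = a i - b i + e%:Z) ->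
  (forall i, a i - b i + 1 <= (s i)%:Z \/ a i - b i + 1 <= (t i)%:Z) ->
  (forall g, chi1 g = charI p tau0 omega (fun i => (s i)%:Z) g) ->
  (forall g, chi2 g = charI p tau0 omega (fun i => (t i)%:Z) g) ->
  let J := [set i | (t i <= e - 1)%N] in
  let x := fun i => if i \in J then (s i)%:Z - (a i - b i + 1) else (s i)%:Z in
  is_maxS p e tau0 omega chi1 chi2 a b J x ->
  J = [set i | (t i)%:Z < a i - b i + 1].
Proof.
move=> _ _ _ _ _ _ _ _ ab_range st_sum st_large _ _ J x xmax.
apply/setP => i; rewrite !inE; have := st_sum i; have := ab_range i.
have [iJ | iNJ] := boolP (i \in J).
- have := is_maxS_lt_sJx xmax iJ; rewrite /sJx /x iJ subrKC.
  by move: iJ; rewrite inE; lia.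
- by move: iNJ; rewrite inE; case: (st_large i); lia.
Qed.
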